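(* Let $p>2$ be a prime, $D$ an integer with $D\not\equiv0\pmod p$, and $\xi\in(0,1)$. Then for any distinct $g,g'\in\mathbb{Z}_p$ there are at least $\xi\cdot(p-1)$ values $c\in\mathbb{Z}_p$ with $c\not\equiv 0\pmod p$ such that \[\mathrm{dist}_{p,D}(c g\bmod p,\ c g'\bmod p) > (1-\xi)\cdot\frac{p-1}{2}.\]
   Context: For $g_0,g_1\in\mathbb{Z}_p$, $\mathrm{dist}_{p,D}(g_0,g_1)=\min\{(g_1-g_0)D^{-1}\bmod p,\ (g_0-g_1)D^{-1}\bmod p\}$, where each term is viewed as an integer in $\{0,\dots,p-1\}$ and $D^{-1}$ is the inverse of $D$ modulo $p$. *)

From mathcomp Require Import all_boot all_order all_algebra.
From mathcomp Require Import reals.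
Set Implicit Arguments. Unset Strict Implicit. Unset Printing Implicit Defensive.
Import Order.TTheory GRing.Theory Num.Theory.
Local Open Scope ring_scope.

Definition distpD (p : nat) (D : int) (g0 g1 : 'F_p) : nat :=
  minn (val ((g1 - g0) / (D%:~R : 'F_p))) (val ((g0 - g1) / (D%:~R : 'F_p))).

From mathcomp Require Import all_boot all_order all_algebra.
From mathcomp Require Import reals.
From mathcomp Require Import lra zify.
Import Order.TTheory GRing.Theory Num.Theory.
Local Open Scope ring_scope.

(* With e = (g' - g) / D, which is nonzero, dist_{p,D}(c g, c g') is the
   cyclic absolute value min(x, p - x) of x = c e.  As c runs over the units
   of F_p so does c e, hence the count equals the number of x whose cyclic
   absolute value exceeds t = floor((1 - xi)(p - 1)/2), which is exactly
   p - 1 - 2t >= xi (p - 1). *)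

Definition Zp_norm {n} (x : 'I_n.+1) : nat := minn x (- x).

Lemma Zp_normE n (x : 'I_n.+1) : Zp_norm x = minn x (n.+1 - x)%N.
Proof.
rewrite /Zp_norm /= /Zp_opp /=.
have [->|x_gt0] := posnP x; first by rewrite !min0n.
by rewrite modn_small // -[X in (_ < X)%N]subn0 ltn_sub2l.
Qed.

Lemma card_ord_range m a b : (b <= m)%N -> #|[set i : 'I_m | (a <= i < b)%N]| = (b - a)%N.
Proof.
move=> le_bm.
rewrite -[(b - a)%N]muln1 -sum_nat_const_nat (big_nat_widenl _ 0) // (big_nat_widen _ _ m) //.
by rewrite big_mkord cardsE -sum1_card; apply: eq_bigl.
Qed.

Lemma card_Zp_norm_gt n t : #|[set x : 'I_n.+1 | (t < Zp_norm x)%N]| = (n - t.*2)%N.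
Proof.
have -> : [set x : 'I_n.+1 | (t < Zp_norm x)%N] = [set x : 'I_n.+1 | (t < x < n.+1 - t)%N].
  by apply/setP => x; rewrite !inE Zp_normE leq_min; congr (_ && _); lia.
rewrite card_ord_range ?leq_subr //; lia.
Qed.

Lemma distpD_Zp_norm p D (g0 g1 : 'F_p) :
  distpD D g0 g1 = Zp_norm ((g1 - g0) / (D%:~R : 'F_p)).
Proof. by rewrite /distpD /Zp_norm -mulNr opprB. Qed.

Lemma ler_natB (R : numDomainType) (m n : nat) : m%:R - n%:R <= (m - n)%N%:R :> R.
Proof.
have [nm|mn] := leqP n m; first by rewrite natrB.
by rewrite (eqnP (ltnW mn)) subr_le0 ler_nat ltnW.
Qed.

Theorem lemma4p1 (R : realType) (p : nat) (D : int) (xi : R)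
  (hp : prime p) (hp2 : (2 < p)%N) (hD : ~~ (p %| `|D|)%N)
  (hxi0 : 0 < xi) (hxi1 : xi < 1) (g g' : 'F_p) (hgg : g != g') :
  xi * (p.-1)%:R <=
  (#|[set c : 'F_p | (c != 0) &&
       ((1 - xi) * (p.-1)%:R / 2%:R < (distpD D (c * g) (c * g'))%:R)]|)%:R.
Proof.
set T := (1 - xi) * (p.-1)%:R / 2%:R.
have T_ge0 : 0 <= T by rewrite divr_ge0 // mulr_ge0 // subr_ge0 ltW.
set t := Num.truncn T.
have t_le_T : t%:R <= T by rewrite truncn_le.
have D_neq0 : (D%:~R : 'F_p) != 0 by rewrite -(dvdz_pcharf (pchar_Fp hp)).
set e := (g' - g) / (D%:~R : 'F_p).
have e_neq0 : e != 0 by rewrite mulf_neq0 ?invr_eq0 // subr_eq0 eq_sym.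
have -> : [set c : 'F_p | (c != 0) && (T < (distpD D (c * g) (c * g'))%:R)] =
          ( *%R^~ e) @^-1: [set x : 'F_p | (t < Zp_norm x)%N].
  apply/setP => c; rewrite !inE distpD_Zp_norm -mulrBr -mulrA -truncn_lt_nat //.
  by case: eqVneq => [->|]; rewrite ?mul0r /Zp_norm ?min0n.
have Fp_size : (Zp_trunc (pdiv p)).+1 = p.-1 by rewrite -[in RHS](Fp_cast hp).
rewrite card_preimset; last exact: mulIf.
rewrite card_Zp_norm_gt Fp_size; apply: le_trans (ler_natB _ _ _).
rewrite -muln2 natrM; move: t_le_T; rewrite /T; lra.
Qed.
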